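(* Let $q$ be even and let $V$ be a $(2m+1)$-dimensional vector space over $\mathbb F_q$ with a nonsingular quadratic form $Q$. Let $W,W'$ be nondegenerate hyperplanes of $V$ (not necessarily of the same type). Then $\Omega(W)\cap\mathrm O(W')\leq\Omega(W')$, as subgroups of the isometry group of $(V,Q)$.
   Context: $Q$ nonsingular means that there is no nonzero $v$ in the radical $V^\perp$ of the associated bilinear form with $Q(v)=0$; then $V^\perp$ is $1$-dimensional. A nondegenerate hyperplane is a hyperplane $W$ with $V=W\oplus V^\perp$ (so $Q|_W$ is nondegenerate). For such $W$, $\mathrm O(W)$ (equal to $\mathrm{SO}(W)$ as $q$ is even) is identified with the group of isometries of $V$ stabilizing $W$ and acting trivially on $V^\perp$, and $\Omega(W)$ is its index-$2$ subgroup, which consists of the $g\in\mathrm O(W)$ with $\dim C_W(g)$ even. *)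

From HB Require Import structures.
From mathcomp Require Import all_boot all_order all_fingroup all_algebra.
Set Implicit Arguments. Unset Strict Implicit. Unset Printing Implicit Defensive.
Import GRing.Theory.
Local Open Scope ring_scope.

(* V = F^(n+1) as row vectors; a quadratic form Q on V is v |-> v A v^T
   for a (non-unique) matrix A; its polar bilinear form
   B(u,w) = Q(u+w) - Q(u) - Q(w) has Gram matrix A + A^T. *)
Section Quad.
Variables (F : fieldType) (n : nat).
Implicit Types (A W : 'M[F]_n.+1) (v : 'rV[F]_n.+1).

Definition qform A v : F := (v *m A *m v^T) 0 0.

Definition radical A : 'M[F]_n.+1 := kermx (A + A^T).

Definition nonsingular A : Prop :=
  forall v, (v <= radical A)%MS -> qform A v = 0 -> v = 0.

Definition nondeg_hyperplane A W : Prop :=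
  [/\ \rank W = n, (W :&: radical A == (0 : 'M_n.+1))%MS & (W + radical A == 1%:M)%MS].
End Quad.

Section Groups.
Variables (F : finFieldType) (n : nat).
Implicit Types (A W : 'M[F]_n.+1).

Definition isom_grp A : {set {'GL_n.+1[F]}} :=
  [set g : {'GL_n.+1[F]} | [forall v : 'rV[F]_n.+1,
     qform A (v *m GLval g) == qform A v]].

(* O(W): isometries stabilizing W and acting trivially on V^perp *)
Definition Orth A W : {set {'GL_n.+1[F]}} :=
  [set g in isom_grp A | (W *m GLval g == W)%MS &&
     (radical A *m GLval g == radical A)].

Definition fixW W (g : {'GL_n.+1[F]}) : 'M[F]_n.+1 :=
  (W :&: kermx (GLval g - 1%:M))%MS.

Definition Omega A W : {set {'GL_n.+1[F]}} :=
  [set g in Orth A W | ~~ odd (\rank (fixW W g))].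
End Groups.

From mathcomp Require Import all_boot all_order all_fingroup all_algebra.
Set Implicit Arguments. Unset Strict Implicit. Unset Printing Implicit Defensive.
Import GRing.Theory.
Local Open Scope ring_scope.

(* An element g of O(W) is the identity on the radical R = V^perp
   and V = W (+) R.  Hence the fixed space C_V(g) contains R, and by the
   modular law C_V(g) = C_W(g) (+) R, so that
       dim C_W(g) = dim C_V(g) - dim R.
   The right-hand side does not mention W.  So if g lies in O(W) and in O(W')
   for two nondegenerate hyperplanes W, W', then dim C_W(g) = dim C_W'(g); in
   particular the parity condition defining Omega(W) transfers to Omega(W'). *)

Lemma rank_cap_complement (F : fieldType) (m1 m2 m3 n : nat)
    (W : 'M[F]_(m1, n)) (R : 'M[F]_(m2, n)) (K : 'M[F]_(m3, n)) :
  (R <= K)%MS -> \rank (W :&: R)%MS = 0%N -> (1%:M <= W + R)%MS ->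
  (\rank (W :&: K) + \rank R = \rank K)%N.
Proof.
move=> sRK WR0 WRfull.
have sum_eq : (R + (W :&: K) :=: K)%MS.
  apply: eqmx_trans (matrix_modl W sRK) _; apply/capmx_idPr.
  by rewrite addsmxC (submx_trans _ WRfull) ?submx1.
have cap0 : \rank (R :&: (W :&: K)) = 0%N.
  apply/eqP; rewrite -leqn0 -WR0 mxrankS //.
  by rewrite capmxC capmxS ?capmxSl.
have := mxrank_sum_cap R (W :&: K)%MS.
by rewrite sum_eq cap0 addn0 addnC.
Qed.

Section FixedSpaces.
Variables (F : finFieldType) (n : nat) (A : 'M[F]_n.+1).

Definition fix_space (g : {'GL_n.+1[F]}) : 'M[F]_n.+1 := kermx (GLval g - 1%:M).

Lemma radical_sub_fix_space (W : 'M[F]_n.+1) (g : {'GL_n.+1[F]}) :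
  g \in Orth A W -> (radical A <= fix_space g)%MS.
Proof.
rewrite inE => /and3P [_ _ /eqP gR].
by apply/sub_kermxP; rewrite mulmxBr mulmx1 gR subrr.
Qed.

Lemma rank_fixW (W : 'M[F]_n.+1) (g : {'GL_n.+1[F]}) :
  nondeg_hyperplane A W -> g \in Orth A W ->
  (\rank (fixW W g) + \rank (radical A) = \rank (fix_space g))%N.
Proof.
move=> [_ /eqmxP WR0 /eqmxP WRfull] gO.
apply: rank_cap_complement; first exact: radical_sub_fix_space gO.
  by rewrite WR0 mxrank0.
by rewrite WRfull.
Qed.

Lemma rank_fixW_indep (W W' : 'M[F]_n.+1) (g : {'GL_n.+1[F]}) :
  nondeg_hyperplane A W -> nondeg_hyperplane A W' ->
  g \in Orth A W -> g \in Orth A W' ->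
  \rank (fixW W g) = \rank (fixW W' g).
Proof.
move=> hW hW' gO gO'; apply/eqP.
by rewrite -(eqn_add2r (\rank (radical A))) rank_fixW // rank_fixW.
Qed.

End FixedSpaces.

Theorem mainTheorem14 (F : finFieldType) (m : nat) (A W W' : 'M[F]_((2 * m).+1)) :
  (2%N \in [pchar F]) ->
  nonsingular A ->
  nondeg_hyperplane A W -> nondeg_hyperplane A W' ->
  Omega A W :&: Orth A W' \subset Omega A W'.
Proof.
move=> _ _ hW hW'; apply/subsetP => g.
rewrite inE => /andP [/setIdP [gO even_fixW] gO'].
by rewrite inE gO' -(rank_fixW_indep hW hW').
Qed.
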